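(* Consider an anode solution with active-layer boundary $-h_a\in(-h_3,-h_1)$ in the classical formulation, i.e. with $\eta=s_a$, and assume $j_{\mathrm{cell}}>0$. Then there exists $\varepsilon>0$ such that $\eta(y)<0$ for all $y\in(-h_a,-h_a+\varepsilon)$. Consequently the anodic charge-transfer current is negative on $(-h_a,-h_a+\varepsilon)$.
   Context: Anode model (isothermal, 1D). Fix real numbers $0<h_1<h_a<h_3$ and positive constants $\sigma_{\mathrm{el}},\sigma_{\mathrm{ion}}$ (effective conductivities), $\rho_f$ (fuel density), $D_1$ (effective diffusion coefficient), $M_{H_2}$ and $M_{H_2O}$ (molar masses), $F,R,T$ (Faraday constant, gas constant, temperature) and $l>0$. Also fix $j_{\mathrm{cell}}>0$, $V_3\in\mathbb R$ and bulk mass fractions $C_{H_2}^{\mathrm{bulk}},C_{H_2O}^{\mathrm{bulk}}\in(0,1)$. Define the signed quantity $$s_a=\phi_{\mathrm{el}}-\phi_{\mathrm{ion}}-\frac{RT}{2F}\ln\Big(\frac{C_{H_2}^{\mathrm{bulk}}}{C_{H_2}}\cdot\frac{C_{H_2O}}{C_{H_2O}^{\mathrm{bulk}}}\Big).$$ The activation overpotential is $\eta=s_a$ in the classical formulation and $\eta=|s_a|$ in the modified formulation. Charge-transfer current. For $y\in(-h_a,-h_1)$ set $$i=l\,i_0\Big[\exp\Big(\frac{2F\eta}{RT}\Big)-\exp\Big(-\frac{F\eta}{RT}\Big)\Big],\qquad i_0=32.4\,p_{H_2}^{-0.03}p_{H_2O}^{0.4}e^{-152155/(RT)},$$ where $p_{H_2}=\rho_fRTC_{H_2}/M_{H_2}$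 and $p_{H_2O}=\rho_fRTC_{H_2O}/M_{H_2O}$. An anode solution with active-layer boundary $-h_a$ is a tuple $\phi_{\mathrm{el}},\phi_{\mathrm{ion}},C_{H_2},C_{H_2O}\in C^1([-h_3,-h_1])$ with the following properties. - Regularity: each function is $C^2$ on $[-h_3,-h_a]$ and on $[-h_a,-h_1]$, and $C_{H_2},C_{H_2O}>0$. - Equations on $(-h_a,-h_1)$: $(\sigma_{\mathrm{el}}\phi_{\mathrm{el}}')'=i$, $(\sigma_{\mathrm{ion}}\phi_{\mathrm{ion}}')'=-i$, $(\rho_fD_1C_{H_2}')'=\frac{M_{H_2}}{2F}i$ and $(\rho_fD_1C_{H_2O}')'=-\frac{M_{H_2O}}{2F}i$. - Equations on $(-h_3,-h_a)$: all four left-hand sides vanish. - Boundary conditions at $-h_3$: $-\sigma_{\mathrm{el}}\phi_{\mathrm{el}}'(-h_3)=j_{\mathrm{cell}}$, $\phi_{\mathrm{ion}}'(-h_3)=0$, $\phi_{\mathrm{el}}(-h_3)=V_3$, $C_{H_2}(-h_3)=C_{H_2}^{\mathrm{bulk}}$, $C_{H_2O}(-h_3)=C_{H_2O}^{\mathrm{bulk}}$. - Boundary conditions at $-h_1$: $\phi_{\mathrm{el}}'(-h_1)=0$, $-\sigma_{\mathrm{ion}}\phi_{\mathrm{ion}}'(-h_1)=j_{\mathrm{cell}}$, $C_{H_2}'(-h_1)=C_{H_2O}'(-h_1)=0$. - Interface condition: $s_a(-h_a)=0$. *)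

From Stdlib Require Import Reals Lra.
Open Scope R_scope.

Definition deriv_on (f f' : R -> R) (a b : R) : Prop :=
  forall x, a <= x <= b -> forall eps, 0 < eps ->
    exists delta, 0 < delta /\
      forall y, a <= y <= b -> y <> x -> Rabs (y - x) < delta ->
        Rabs ((f y - f x) / (y - x) - f' x) < eps.

Definition cont_on (f : R -> R) (a b : R) : Prop :=
  forall x, a <= x <= b -> forall eps, 0 < eps ->
    exists delta, 0 < delta /\
      forall y, a <= y <= b -> Rabs (y - x) < delta -> Rabs (f y - f x) < eps.

(* u (with first derivative du on [a,b]) is C^2 on [a,b] and satisfies
   (c u')' = g on (a,b). *)
Definition piece_eq (du : R -> R) (a b c : R) (g : R -> R) : Prop :=
  exists d2, deriv_on du d2 a b /\ cont_on d2 a b /\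
    forall y, a < y < b -> c * d2 y = g y.

Definition i0 (rhof Rg T MH2 MH2O cH2 cH2O : R) : R :=
  let pH2 := rhof * Rg * T * cH2 / MH2 in
  let pH2O := rhof * Rg * T * cH2O / MH2O in
  (324 / 10) * Rpower pH2 (- (3 / 100)) * Rpower pH2O (4 / 10)
    * exp (- (152155 / (Rg * T))).

Definition s_a (F Rg T CbH2 CbH2O : R) (pel pion cH2 cH2O : R -> R) (y : R) : R :=
  pel y - pion y
  - Rg * T / (2 * F) * ln (CbH2 / cH2 y * (cH2O y / CbH2O)).

Definition icur (rhof MH2 MH2O F Rg T l CbH2 CbH2O : R)
    (pel pion cH2 cH2O : R -> R) (y : R) : R :=
  let eta := s_a F Rg T CbH2 CbH2O pel pion cH2 cH2O y in
  l * i0 rhof Rg T MH2 MH2O (cH2 y) (cH2O y)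
    * (exp (2 * F * eta / (Rg * T)) - exp (- (F * eta / (Rg * T)))).

Definition anode_solution
    (h1 ha h3 sel sion rhof D1 MH2 MH2O F Rg T l jcell V3 CbH2 CbH2O : R)
    (pel pion cH2 cH2O : R -> R) : Prop :=
  let i := icur rhof MH2 MH2O F Rg T l CbH2 CbH2O pel pion cH2 cH2O in
  exists dpel dpion dcH2 dcH2O : R -> R,
    deriv_on pel dpel (-h3) (-h1) /\ cont_on dpel (-h3) (-h1) /\
    deriv_on pion dpion (-h3) (-h1) /\ cont_on dpion (-h3) (-h1) /\
    deriv_on cH2 dcH2 (-h3) (-h1) /\ cont_on dcH2 (-h3) (-h1) /\
    deriv_on cH2O dcH2O (-h3) (-h1) /\ cont_on dcH2O (-h3) (-h1) /\
    (forall y, -h3 <= y <= -h1 -> 0 < cH2 y /\ 0 < cH2O y) /\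
    piece_eq dpel (-h3) (-ha) sel (fun _ => 0) /\
    piece_eq dpion (-h3) (-ha) sion (fun _ => 0) /\
    piece_eq dcH2 (-h3) (-ha) (rhof * D1) (fun _ => 0) /\
    piece_eq dcH2O (-h3) (-ha) (rhof * D1) (fun _ => 0) /\
    piece_eq dpel (-ha) (-h1) sel i /\
    piece_eq dpion (-ha) (-h1) sion (fun y => - i y) /\
    piece_eq dcH2 (-ha) (-h1) (rhof * D1) (fun y => MH2 / (2 * F) * i y) /\
    piece_eq dcH2O (-ha) (-h1) (rhof * D1) (fun y => - (MH2O / (2 * F) * i y)) /\
    - sel * dpel (-h3) = jcell /\ dpion (-h3) = 0 /\ pel (-h3) = V3 /\
    cH2 (-h3) = CbH2 /\ cH2O (-h3) = CbH2O /\
    dpel (-h1) = 0 /\ - sion * dpion (-h1) = jcell /\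
    dcH2 (-h1) = 0 /\ dcH2O (-h1) = 0 /\
    s_a F Rg T CbH2 CbH2O pel pion cH2 cH2O (-ha) = 0.

(* In the support layer all four equations are homogeneous, so the currents keep
   their values at [-h3]: at [-ha], [pel' = -jcell/sel] and [pion' = 0]. In the
   active layer the source of each species equation is a multiple of that of
   [pel], so [rhof D1 c' - (M/2F) sel pel'] is constant there; evaluating it at
   [-h1], where all these gradients vanish, gives [cH2' < 0 < cH2O'] at [-ha].
   Hence [s_a' (-ha) = -jcell/sel - RT/2F (cH2O'/cH2O - cH2'/cH2) < 0], and since
   [s_a (-ha) = 0], [s_a] is negative just to the right of [-ha]. The
   Butler-Volmer factor [exp (2z) - exp (-z)] has the sign of [z], so the
   current is negative there too. *)

From Stdlib Require Import Reals Lra Psatz.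
Open Scope R_scope.

Lemma deriv_on_interior f f' a b x :
  deriv_on f f' a b -> a < x < b -> derivable_pt_lim f x (f' x).
Proof.
  intros Hf Hx eps Heps.
  destruct (Hf x ltac:(lra) eps Heps) as [d [Hd Hq]].
  assert (Hr : 0 < Rmin d (Rmin (x - a) (b - x))) by (repeat apply Rmin_pos; lra).
  exists (mkposreal _ Hr); simpl; intros h Hh0 Hh.
  pose proof (Rmin_l d (Rmin (x - a) (b - x))) as Hmd.
  pose proof (Rmin_r d (Rmin (x - a) (b - x))) as Hm.
  pose proof (Rmin_l (x - a) (b - x)); pose proof (Rmin_r (x - a) (b - x)).
  assert (Hh' : Rabs h < Rmin (x - a) (b - x)) by lra.
  apply Rabs_def2 in Hh'.
  specialize (Hq (x + h)); replace (x + h - x) with h in Hq by ring.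
  apply Hq; lra.
Qed.

Lemma deriv_on_cont_on f f' a b : deriv_on f f' a b -> cont_on f a b.
Proof.
  intros Hf x Hx eps Heps.
  destruct (Hf x Hx 1 Rlt_0_1) as [d [Hd Hq]].
  set (M := Rabs (f' x) + 1).
  assert (HM : 0 < M) by (unfold M; pose proof (Rabs_pos (f' x)); lra).
  exists (Rmin d (eps / M)); split.
  { apply Rmin_pos; [lra | apply Rdiv_lt_0_compat; lra]. }
  intros y Hy Hyx.
  destruct (Req_dec y x) as [-> | Hne].
  { rewrite Rminus_diag, Rabs_R0; lra. }
  pose proof (Rmin_l d (eps / M)); pose proof (Rmin_r d (eps / M)).
  specialize (Hq y Hy Hne ltac:(lra)).
  set (q := (f y - f x) / (y - x)) in Hq.
  assert (Hqbound : Rabs q < M).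
  { unfold M; replace q with ((q - f' x) + f' x) by ring.
    pose proof (Rabs_triang (q - f' x) (f' x)); lra. }
  replace (f y - f x) with (q * (y - x)) by (unfold q; field; lra).
  rewrite Rabs_mult.
  replace eps with (M * (eps / M)) by (field; lra).
  apply Rmult_le_0_lt_compat; try apply Rabs_pos; lra.
Qed.

Lemma deriv_on_lincomb f f' g g' al be a b :
  deriv_on f f' a b -> deriv_on g g' a b ->
  deriv_on (fun y => al * f y + be * g y) (fun y => al * f' y + be * g' y) a b.
Proof.
  intros Hf Hg x Hx eps Heps.
  set (S := Rabs al + Rabs be + 1).
  assert (HS : 0 < S) by (unfold S; pose proof (Rabs_pos al); pose proof (Rabs_pos be); lra).
  assert (HeS : 0 < eps / S) by (apply Rdiv_lt_0_compat; lra).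
  destruct (Hf x Hx _ HeS) as [d1 [Hd1 H1]].
  destruct (Hg x Hx _ HeS) as [d2 [Hd2 H2]].
  exists (Rmin d1 d2); split; [apply Rmin_pos; lra |].
  intros y Hy Hne Hyx.
  pose proof (Rmin_l d1 d2); pose proof (Rmin_r d1 d2).
  specialize (H1 y Hy Hne ltac:(lra)); specialize (H2 y Hy Hne ltac:(lra)).
  replace ((al * f y + be * g y - (al * f x + be * g x)) / (y - x)
           - (al * f' x + be * g' x))
    with (al * ((f y - f x) / (y - x) - f' x) + be * ((g y - g x) / (y - x) - g' x))
    by (field; lra).
  eapply Rle_lt_trans; [apply Rabs_triang |]; rewrite !Rabs_mult.
  assert (HSe : S * (eps / S) = eps) by (field; lra).
  set (e := eps / S) in *.
  pose proof (Rmult_le_compat_l _ _ _ (Rabs_pos al) (Rlt_le _ _ H1)).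
  pose proof (Rmult_le_compat_l _ _ _ (Rabs_pos be) (Rlt_le _ _ H2)).
  unfold S in HSe; lra.
Qed.

Lemma eq_of_Rabs_lt_all x y : (forall eps, 0 < eps -> Rabs (x - y) < eps) -> x = y.
Proof.
  intros H; destruct (Req_dec x y) as [E | E]; [exact E |].
  specialize (H (Rabs (x - y)) ltac:(apply Rabs_pos_lt; lra)); lra.
Qed.

Lemma cont_on_endpoints_eq h a b :
  a < b -> cont_on h a b -> (forall x, a < x < b -> derivable_pt_lim h x 0) ->
  h a = h b.
Proof.
  intros Hab Hc Hd.
  set (m := (a + b) / 2).
  assert (Hinterior : forall x, a < x < b -> h x = h m).
  { intros x Hx.
    assert (Hmvt : forall u v, a < u -> u < v -> v < b -> h u = h v).
    { intros u v Hu Huv Hv.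
      destruct (MVT_cor2 h (fun _ => 0) u v Huv) as [c [Hc' _]].
      - intros c Hcuv; apply Hd; lra.
      - lra. }
    destruct (Rtotal_order x m) as [Hlt | [-> | Hgt]];
      [apply Hmvt | reflexivity | symmetry; apply Hmvt]; unfold m in *; lra. }
  assert (Hend : forall c, c = a \/ c = b -> h c = h m).
  { intros c Hc'; apply eq_of_Rabs_lt_all; intros eps Heps.
    destruct (Hc c ltac:(lra) eps Heps) as [d [Hd0 Hy]].
    set (s := Rmin d (b - a) / 2).
    assert (Hs : 0 < s < d /\ s < b - a).
    { pose proof (Rmin_l d (b - a)); pose proof (Rmin_r d (b - a)).
      pose proof (Rmin_pos d (b - a) Hd0 ltac:(lra)); unfold s; lra. }
    assert (Hnear : exists y, a < y < b /\ Rabs (y - c) < d).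
    { destruct Hc' as [-> | ->]; [exists (a + s) | exists (b - s)];
        (split; [lra |]); [rewrite Rabs_right | rewrite Rabs_left]; lra. }
    destruct Hnear as [y [Hya Hyc]].
    rewrite <- (Hinterior y Hya), <- Rabs_Ropp, Ropp_minus_distr.
    apply Hy; lra. }
  rewrite (Hend a), (Hend b); auto.
Qed.

Lemma deriv_on_zero_endpoints_eq h h' a b :
  a < b -> deriv_on h h' a b -> (forall x, a < x < b -> h' x = 0) -> h a = h b.
Proof.
  intros Hab Hh Hzero.
  apply cont_on_endpoints_eq; [exact Hab | exact (deriv_on_cont_on _ _ _ _ Hh) |].
  intros x Hx; rewrite <- (Hzero x Hx); exact (deriv_on_interior _ _ _ _ _ Hh Hx).
Qed.

Lemma piece_eq_homogeneous du a b c :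
  a < b -> c <> 0 -> piece_eq du a b c (fun _ => 0) -> du a = du b.
Proof.
  intros Hab Hc [d2 [Hd2 [_ Heq]]].
  apply (deriv_on_zero_endpoints_eq _ d2 a b Hab Hd2).
  intros x Hx; specialize (Heq x Hx); simpl in Heq.
  destruct (Rmult_integral _ _ Heq); [contradiction | assumption].
Qed.

Lemma piece_eq_flux_balance du dv a b c c' k g gv :
  a < b -> piece_eq du a b c g -> piece_eq dv a b c' gv ->
  (forall y, gv y = k * g y) ->
  c' * dv a - k * c * du a = c' * dv b - k * c * du b.
Proof.
  intros Hab [d2u [Hu [_ Equ]]] [d2v [Hv [_ Eqv]]] Hgv.
  pose proof (deriv_on_lincomb _ _ _ _ c' (- (k * c)) a b Hv Hu) as Hflux.
  pose proof (deriv_on_zero_endpoints_eq _ _ a b Hab Hflux) as Hconst.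
  simpl in Hconst.
  replace (c' * dv a - k * c * du a) with (c' * dv a + - (k * c) * du a) by ring.
  replace (c' * dv b - k * c * du b) with (c' * dv b + - (k * c) * du b) by ring.
  apply Hconst; intros x Hx.
  specialize (Equ x Hx); specialize (Eqv x Hx); rewrite Hgv in Eqv.
  replace (c' * d2v x + - (k * c) * d2u x) with (c' * d2v x - k * (c * d2u x)) by ring.
  rewrite Eqv, Equ; ring.
Qed.

Lemma s_a_derivable F Rg T CbH2 CbH2O pel pion cH2 cH2O x pel' pion' cH2' cH2O' :
  0 < CbH2 -> 0 < CbH2O -> 0 < cH2 x -> 0 < cH2O x ->
  derivable_pt_lim pel x pel' -> derivable_pt_lim pion x pion' ->
  derivable_pt_lim cH2 x cH2' -> derivable_pt_lim cH2O x cH2O' ->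
  derivable_pt_lim (s_a F Rg T CbH2 CbH2O pel pion cH2 cH2O) x
    (pel' - pion' - Rg * T / (2 * F) * (cH2O' / cH2O x - cH2' / cH2 x)).
Proof.
  intros HCb HCbo Hc Hco Dpel Dpion Dc Dco.
  pose proof (derivable_pt_lim_div (fct_cte CbH2) cH2 x 0 _
                (derivable_pt_lim_const CbH2 x) Dc ltac:(lra)) as Dratio.
  pose proof (derivable_pt_lim_div cH2O (fct_cte CbH2O) x _ 0
                Dco (derivable_pt_lim_const CbH2O x) ltac:(unfold fct_cte; lra)) as Dratio'.
  pose proof (derivable_pt_lim_mult _ _ _ _ _ Dratio Dratio') as Dprod.
  assert (Hprod : 0 < CbH2 / cH2 x * (cH2O x / CbH2O)).
  { apply Rmult_lt_0_compat; apply Rdiv_lt_0_compat; lra. }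
  pose proof (derivable_pt_lim_comp _ ln _ _ _ Dprod (derivable_pt_lim_ln _ Hprod)) as Dln.
  pose proof (derivable_pt_lim_minus _ _ _ _ _
                (derivable_pt_lim_minus _ _ _ _ _ Dpel Dpion)
                (derivable_pt_lim_scal _ (Rg * T / (2 * F)) _ _ Dln)) as Ds.
  set (K := Rg * T / (2 * F)) in *.
  match type of Ds with
  | derivable_pt_lim _ _ ?L =>
      replace (pel' - pion' - K * (cH2O' / cH2O x - cH2' / cH2 x)) with L
  end.
  - exact Ds.
  - unfold fct_cte, mult_fct, div_fct, Rsqr; field; repeat split; lra.
Qed.

Lemma derivable_pt_lim_neg_right_of_root f x L :
  derivable_pt_lim f x L -> L < 0 -> f x = 0 ->
  exists d, 0 < d /\ forall y, x < y < x + d -> f y < 0.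
Proof.
  intros Df HL Hroot.
  destruct (Df (- L / 2) ltac:(lra)) as [d Hd].
  exists d; split; [apply cond_pos |]; intros y Hy.
  specialize (Hd (y - x) ltac:(lra) ltac:(rewrite Rabs_right; lra)).
  replace (x + (y - x)) with y in Hd by ring.
  rewrite Hroot, Rminus_0_r in Hd; apply Rabs_def2 in Hd.
  (* the difference quotient f y / (y - x) is below L / 2 < 0 *)
  assert (Hq : f y / (y - x) < 0) by lra.
  apply Rnot_le_lt; intros Hfy; apply (Rlt_not_le _ _ Hq).
  apply Rmult_le_pos; [lra | left; apply Rinv_0_lt_compat; lra].
Qed.

Lemma i0_pos rhof Rg T MH2 MH2O cH2 cH2O : 0 < i0 rhof Rg T MH2 MH2O cH2 cH2O.
Proof.
  unfold i0, Rpower; simpl.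
  repeat apply Rmult_lt_0_compat; try apply exp_pos; lra.
Qed.

Lemma icur_neg_of_s_a_neg rhof MH2 MH2O F Rg T l CbH2 CbH2O pel pion cH2 cH2O y :
  0 < F -> 0 < Rg -> 0 < T -> 0 < l ->
  s_a F Rg T CbH2 CbH2O pel pion cH2 cH2O y < 0 ->
  icur rhof MH2 MH2O F Rg T l CbH2 CbH2O pel pion cH2 cH2O y < 0.
Proof.
  intros HF HRg HT Hl Hs; unfold icur.
  set (eta := s_a F Rg T CbH2 CbH2O pel pion cH2 cH2O y) in *.
  set (z := F * eta / (Rg * T)).
  assert (Hz : z < 0).
  { unfold z, Rdiv; apply Rmult_neg_pos; [nra | apply Rinv_0_lt_compat; nra]. }
  replace (2 * F * eta / (Rg * T)) with (2 * z) by (unfold z; field; nra).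
  assert (Hexp : exp (2 * z) < exp (- z)) by (apply exp_increasing; lra).
  apply Rmult_pos_neg; [| lra].
  apply Rmult_lt_0_compat; [exact Hl | apply i0_pos].
Qed.

Section AnodeInterface.

Context {h1 ha h3 sel sion rhof D1 MH2 MH2O F Rg T l jcell V3 CbH2 CbH2O : R}.
Context {pel pion cH2 cH2O : R -> R}.

Hypotheses (Hh1a : h1 < ha) (Hha3 : ha < h3).
Hypotheses (Hsel : 0 < sel) (Hsion : 0 < sion) (Hrhof : 0 < rhof) (HD1 : 0 < D1).
Hypotheses (HMH2 : 0 < MH2) (HMH2O : 0 < MH2O) (HF : 0 < F) (Hj : 0 < jcell).
Hypotheses (HRg : 0 < Rg) (HT : 0 < T) (HCb : 0 < CbH2) (HCbo : 0 < CbH2O).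

Hypothesis Hsol :
  anode_solution h1 ha h3 sel sion rhof D1 MH2 MH2O F Rg T l jcell V3 CbH2 CbH2O
    pel pion cH2 cH2O.

Let s := s_a F Rg T CbH2 CbH2O pel pion cH2 cH2O.

Lemma anode_interface_root : s (-ha) = 0.
Proof. destruct Hsol as (? & ? & ? & ? & H); repeat apply proj2 in H; exact H. Qed.

Lemma anode_interface_gradients :
  exists dpel dpion dcH2 dcH2O,
    derivable_pt_lim pel (-ha) (dpel (-ha)) /\
    derivable_pt_lim pion (-ha) (dpion (-ha)) /\
    derivable_pt_lim cH2 (-ha) (dcH2 (-ha)) /\
    derivable_pt_lim cH2O (-ha) (dcH2O (-ha)) /\
    dpel (-ha) = - jcell / sel /\ dpion (-ha) = 0 /\
    dcH2 (-ha) < 0 < dcH2O (-ha) /\ 0 < cH2 (-ha) /\ 0 < cH2O (-ha).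
Proof.
  destruct Hsol as (dpel & dpion & dcH2 & dcH2O & Dpel & _ & Dpion & _ & DcH2 & _ &
    DcH2O & _ & Hpos & Spel & Spion & _ & _ & Apel & _ & AcH2 & AcH2O &
    Bpel & Bpion & _ & _ & _ & Tpel & _ & TcH2 & TcH2O & _).
  exists dpel, dpion, dcH2, dcH2O.
  assert (Hin : -h3 < -ha < -h1) by lra.
  assert (Epel : dpel (-h3) = dpel (-ha)) by (apply (piece_eq_homogeneous _ _ _ sel); auto; lra).
  assert (Epion : dpion (-h3) = dpion (-ha)) by (apply (piece_eq_homogeneous _ _ _ sion); auto; lra).
  assert (Vpel : dpel (-ha) = - jcell / sel) by (rewrite <- Epel, <- Bpel; field; lra).
  assert (Hal : -ha < -h1) by lra.
  pose proof (piece_eq_flux_balance _ _ _ _ _ _ (MH2 / (2 * F)) _ _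
                Hal Apel AcH2 (fun y => eq_refl)) as Flux.
  pose proof (piece_eq_flux_balance _ _ _ _ _ _ (- (MH2O / (2 * F))) _ _
                Hal Apel AcH2O (fun y => Ropp_mult_distr_l _ _)) as Flux'.
  rewrite Tpel, TcH2, Vpel in Flux; rewrite Tpel, TcH2O, Vpel in Flux'.
  assert (HrD : 0 < rhof * D1) by nra.
  assert (Hk : 0 < MH2 / (2 * F) * jcell) by (apply Rmult_lt_0_compat; [apply Rdiv_lt_0_compat|]; lra).
  assert (Hk' : 0 < MH2O / (2 * F) * jcell) by (apply Rmult_lt_0_compat; [apply Rdiv_lt_0_compat|]; lra).
  replace (MH2 / (2 * F) * sel * (- jcell / sel)) with (- (MH2 / (2 * F) * jcell)) in Flux
    by (field; lra).
  replace (- (MH2O / (2 * F)) * sel * (- jcell / sel)) with (MH2O / (2 * F) * jcell) in Flux'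
    by (field; lra).
  repeat split; try (eapply deriv_on_interior; eauto); try apply Hpos; try nra; lra.
Qed.

Lemma anode_interface_slope : exists L, L < 0 /\ derivable_pt_lim s (-ha) L.
Proof.
  destruct anode_interface_gradients as (dpel & dpion & dcH2 & dcH2O & Dpel & Dpion &
    DcH2 & DcH2O & Vpel & Vpion & [Sc Sco] & Pc & Pco).
  eexists; split; [| exact (s_a_derivable _ _ _ _ _ _ _ _ _ _ _ _ _ _ HCb HCbo Pc Pco
                              Dpel Dpion DcH2 DcH2O)].
  assert (HK : 0 < Rg * T / (2 * F)) by (apply Rdiv_lt_0_compat; nra).
  assert (0 < dcH2O (-ha) / cH2O (-ha)) by (apply Rdiv_lt_0_compat; lra).
  assert (0 < - dcH2 (-ha) / cH2 (-ha)) by (apply Rdiv_lt_0_compat; lra).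
  assert (0 < jcell / sel) by (apply Rdiv_lt_0_compat; lra).
  rewrite Vpel, Vpion; unfold Rdiv in *; nra.
Qed.

End AnodeInterface.

Theorem mainTheorem3
  (h1 ha h3 sel sion rhof D1 MH2 MH2O F Rg T l jcell V3 CbH2 CbH2O : R)
  (pel pion cH2 cH2O : R -> R) :
  0 < h1 -> h1 < ha -> ha < h3 ->
  0 < sel -> 0 < sion -> 0 < rhof -> 0 < D1 -> 0 < MH2 -> 0 < MH2O ->
  0 < F -> 0 < Rg -> 0 < T -> 0 < l ->
  0 < jcell ->
  0 < CbH2 < 1 -> 0 < CbH2O < 1 ->
  anode_solution h1 ha h3 sel sion rhof D1 MH2 MH2O F Rg T l jcell V3 CbH2 CbH2O
    pel pion cH2 cH2O ->
  exists eps, 0 < eps /\ -ha + eps <= -h1 /\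
    forall y, -ha < y < -ha + eps ->
      s_a F Rg T CbH2 CbH2O pel pion cH2 cH2O y < 0 /\
      icur rhof MH2 MH2O F Rg T l CbH2 CbH2O pel pion cH2 cH2O y < 0.
Proof.
  intros _ Hh1a Hha3 Hsel Hsion Hrhof HD1 HMH2 HMH2O HF HRg HT Hl Hj [HCb _] [HCbo _] Hsol.
  destruct (anode_interface_slope Hh1a Hha3 Hsel Hsion Hrhof HD1 HMH2 HMH2O HF Hj
              HRg HT HCb HCbo Hsol) as (L & HL & DL).
  destruct (derivable_pt_lim_neg_right_of_root _ _ _ DL HL (anode_interface_root Hsol))
    as (d & Hd & Hneg).
  exists (Rmin d (ha - h1)); split; [apply Rmin_pos; lra |].
  pose proof (Rmin_l d (ha - h1)); pose proof (Rmin_r d (ha - h1)).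
  split; [lra |]; intros y Hy.
  assert (Hs : s_a F Rg T CbH2 CbH2O pel pion cH2 cH2O y < 0) by (apply Hneg; lra).
  split; [exact Hs | apply icur_neg_of_s_a_neg; assumption].
Qed.
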